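(* For $n\ge 0$, $$(\mathfrak C_0+\mathfrak C_2)^n=(2n)!\sum_{l=0}^{n+1}\frac{(-1)^{n-l-1}(2l-1)(3n^2-3nl+2l^2+4n-3l+1)(2n-2l-1)!!}{3\cdot 2^{n-l}(n-l+1)!\,(2l)!}\mathfrak C_{2l}.$$
   Context: The numbers $\mathfrak C_{2n}$ (Cauchy numbers with level $2$) are defined by $\frac{t}{{\rm arcsinh}\,t}=\sum_{n=0}^\infty\mathfrak C_{2n}\frac{t^{2n}}{(2n)!}$. Convolution notation: $(\mathfrak C_{2j_1}+\cdots+\mathfrak C_{2j_k})^n:=\sum_{i_1+\cdots+i_k=n,\ i_1,\dots,i_k\ge0}\frac{(2n)!}{(2i_1)!\cdots(2i_k)!}\mathfrak C_{2i_1+2j_1}\cdots\mathfrak C_{2i_k+2j_k}$. Double factorials: $(2i-1)!!=(2i-1)(2i-3)\cdots1$ for $i\ge1$, $(-1)!!=1$, and $(-(2i+1))!!=\frac{(-1)^i}{(2i-1)!!}$ for $i\ge1$. *)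

From mathcomp Require Import all_boot all_order all_algebra.
Set Implicit Arguments. Unset Strict Implicit. Unset Printing Implicit Defensive.
Import Order.TTheory GRing.Theory Num.Theory.
Local Open Scope ring_scope.

(* Maclaurin coefficient of t^(2k+1) in arcsinh t:
   arcsinh t = sum_k (-1)^k (2k)! / (4^k (k!)^2 (2k+1)) t^(2k+1). *)
Definition asinh_coef (k : nat) : rat :=
  (-1) ^+ k * ((2 * k)`!)%:R / ((4 ^ k * (k`!) ^ 2 * (2 * k).+1)%N)%:R.

(* t / arcsinh t = 1 / (sum_k asinh_coef k t^(2k)) as formal power series.
   bseq n = [:: b_0; ...; b_n], the coefficients of t^(2i) of the reciprocal:
   b_0 = 1 and sum_{k=0}^{n} asinh_coef k * b_(n-k) = 0 for n >= 1. *)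
Fixpoint bseq (n : nat) : seq rat :=
  match n with
  | 0 => [:: 1]
  | m.+1 => let s := bseq m in
            rcons s (- \sum_(k < m.+1) asinh_coef k.+1 * nth 0 s (m - k))
  end.

(* Cauchy numbers with level 2:  Cauchy2 n = \mathfrak C_{2n}, i.e.
   t / arcsinh t = sum_n Cauchy2 n * t^(2n) / (2n)!. *)
Definition Cauchy2 (n : nat) : rat := ((2 * n)`!)%:R * nth 0 (bseq n) n.

(* (C_0 + C_2)^n = sum_{i1+i2=n} (2n)!/((2 i1)! (2 i2)!) C_{2 i1} C_{2 i2 + 2} *)
Definition conv_C0_C2 (n : nat) : rat :=
  \sum_(i < n.+1) ((2 * n)`!)%:R / (((2 * i)`!)%:R * ((2 * (n - i))`!)%:R)
                   * Cauchy2 i * Cauchy2 (n - i).+1.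

(* (2k-1)!! for k : nat (with (-1)!! = 1) *)
Definition oddfact (k : nat) : nat := \prod_(i < k) (2 * i).+1.

(* (2m-1)!! for m : int, with the convention (-(2i+1))!! = (-1)^i/(2i-1)!!
   for i >= 1 (here m = -i). *)
Definition dfact_odd (m : int) : rat :=
  match m with
  | Posz k => (oddfact k)%:R
  | Negz k => (-1) ^+ k.+1 / (oddfact k.+1)%:R
  end.

From Pilot Require Import Defs.
From mathcomp Require Import all_boot all_order all_algebra.
From mathcomp Require Import ring lra zify.
Set Implicit Arguments. Unset Strict Implicit. Unset Printing Implicit Defensive.
Import Order.TTheory GRing.Theory Num.Theory.
Local Open Scope ring_scope.

(* Let f t = t / asinh t = sum_n C_{2n} t^{2n} / (2n)!, w t = sqrt (1 + t^2) and
   delta = t d/dt.  The left-hand side is (2n)! times the coefficient of t^{2n+2}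
   in t^2 f f'' = f (delta^2 f - delta f).  Since (asinh t)' = 1 / w, one has
   delta f = f - f^2 / w and delta (1 / w) = - t^2 / w^3, so t^2 f f'' is a
   polynomial in f, 1 / w and t^2; the same polynomial (times -6) comes out of
   a combination of delta^i f * delta^j w that is linear in f.  Comparing
   coefficients of t^{2n+2}, with those of w written through double factorials,
   gives the formula. *)

Section DerivationIdentities.
Variables (R : comRingType) (d : R -> R).
Hypothesis d_add : {morph d : u v / u + v}.
Hypothesis d_mul : forall u v, d (u * v) = d u * v + u * d v.

Lemma der0 : d 0 = 0.
Proof. by apply: (addrI (d 0)); rewrite -d_add !addr0. Qed.

Lemma derN u : d (- u) = - d u.
Proof. by apply: (addrI (d u)); rewrite -d_add !subrr der0. Qed.

Lemma derB u v : d (u - v) = d u - d v.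
Proof. by rewrite d_add derN. Qed.

Lemma der1 : d 1 = 0.
Proof.
have dd1 : d 1 = d 1 + d 1 by rewrite -[in LHS](mulr1 1) d_mul mulr1 mul1r.
by apply: (addrI (d 1)); rewrite -dd1 addr0.
Qed.

Lemma der_nat k : d k%:R = 0.
Proof. by elim: k => [|k IHk]; rewrite ?der0 // mulrS d_add der1 IHk addr0. Qed.

Lemma derX u k : d (u ^+ k.+1) = u ^+ k * d u *+ k.+1.
Proof.
elim: k => [|k IHk]; first by rewrite expr1 expr0 mul1r.
by rewrite exprS d_mul IHk mulrnAr mulrA -exprS [d u * _]mulrC (mulrS _ k.+1).
Qed.

Let dE := (d_add, derB, derN, d_mul, derX, der_nat, der1).

(* [d] plays the role of t d/dt and [x] that of t^2. *)
Variable x : R.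
Hypothesis dx : d x = x *+ 2.

Lemma der_inv A B : A * B = 1 -> d B = B - B ^+ 2 * (A + d A).
Proof.
move=> AB; have dAB : d A * B + A * d B = 0 by rewrite -d_mul AB der1.
apply/esym/subr0_eq.
have -> : B - B ^+ 2 * (A + d A) - d B
          = B * (1 - A * B) - B * (d A * B + A * d B) - d B * (1 - A * B) by ring.
by rewrite AB dAB subrr !mulr0 !subr0.
Qed.

Lemma der_1pX_sqr D : (1 + x) * d D = - (x * D) -> d ((1 + x) * D ^+ 2) = 0.
Proof.
move=> dD; rewrite !dE dx.
have -> : (0 + x *+ 2) * D ^+ 2 + (1 + x) * (D ^+ 1 * d D *+ 2)
          = (x * D ^+ 2 + D * ((1 + x) * d D)) *+ 2 by ring.
by rewrite dD; ring.
Qed.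

Lemma der_sqrt_mul_rsqrt S D :
    (1 + x) * d S = x * S -> (1 + x) * d D = - (x * D) -> (1 + x) * D ^+ 2 = 1 ->
  d (S * D) = 0.
Proof.
move=> dS dD xD2; rewrite d_mul -[LHS]mul1r -{1}xD2.
have -> : (1 + x) * D ^+ 2 * (d S * D + S * d D)
          = D ^+ 3 * ((1 + x) * d S) + S * D ^+ 2 * ((1 + x) * d D) by ring.
by rewrite dS dD; ring.
Qed.

Lemma der_rsqrt D : (1 + x) * D ^+ 2 = 1 -> (1 + x) * d D = - (x * D) ->
  d D = - (x * D ^+ 3).
Proof.
move=> xD2 dD.
have -> : d D = D ^+ 2 * ((1 + x) * d D) + d D * (1 - (1 + x) * D ^+ 2) by ring.
by rewrite dD xD2 subrr mulr0 addr0; ring.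
Qed.

(* [B], [D] and [S] play the roles of f, 1 / w and w. *)
Section FfppIdentity.
Variables B D S : R.
Hypotheses (dB : d B = B - B ^+ 2 * D) (dD : d D = - (x * D ^+ 3)) (SD : S * D = 1).

Lemma der_sqrt : d S = x * D.
Proof.
have dSD : d S * D + S * d D = 0 by rewrite -d_mul SD der1.
apply: subr0_eq.
have -> : d S - x * D = d S * (1 - S * D) + S * (d S * D + S * d D)
                        - x * D * (1 - S * D) * (1 + S * D)
                        - S ^+ 2 * (d D + x * D ^+ 3) by ring.
by rewrite SD dSD dD; ring.
Qed.

Lemma ffpp_identity :
  6 * (B * (d (d B) - d B))
  + (2 * (d (d (d B)) * S) + 3 * (d (d B) * d S) + 3 * (d B * d (d S))
     - 6 * (d (d B) * S) - 7 * (d B * d S) - 3 * (B * d (d S))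
     + 4 * (d B * S) + 4 * (B * d S)) = 0.
Proof.
have dS := der_sqrt.
have d2B : d (d B) = B - 3 * (B ^+ 2 * D) + 2 * (B ^+ 3 * D ^+ 2) + x * B ^+ 2 * D ^+ 3.
  by rewrite dB !dE dB dD; ring.
have d3B : d (d (d B)) = B - 7 * (B ^+ 2 * D) + 12 * (B ^+ 3 * D ^+ 2)
    + 7 * (x * B ^+ 2 * D ^+ 3) - 6 * (B ^+ 4 * D ^+ 3) - 6 * (x * B ^+ 3 * D ^+ 4)
    - 3 * (x ^+ 2 * B ^+ 2 * D ^+ 5).
  by rewrite d2B !dE dx dB dD; ring.
have d2S : d (d S) = 2 * (x * D) - x ^+ 2 * D ^+ 3 by rewrite dS !dE dx dD; ring.
have xffpp : B * (d (d B) - d B) = B ^+ 3 * D * (2 * (B * D) + x * D ^+ 2 - 2).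
  by rewrite d2B dB; ring.
rewrite xffpp d3B d2B dB d2S dS.
(* every remaining [S]-term carries a factor [D] *)
transitivity ((S * D - 1) * (12 * (B ^+ 3 * D) + 8 * (x * B ^+ 2 * D ^+ 2)
  - 12 * (B ^+ 4 * D ^+ 2) - 12 * (x * B ^+ 3 * D ^+ 3) - 6 * (x ^+ 2 * B ^+ 2 * D ^+ 4))).
  by ring.
by rewrite SD subrr mul0r.
Qed.

End FfppIdentity.

End DerivationIdentities.

Definition inv_asinh_coef k := nth 0 (Defs.bseq k) k.

Definition sqrt1p_coef k : rat :=
  if k is j.+1 then (-1) ^+ j * (oddfact j)%:R / (2 ^+ j.+1 * (j.+1)`!%:R) else 1.

Lemma natr_fact_neq0 m : (m`!)%:R != 0 :> rat.
Proof. by rewrite pnatr_eq0 -lt0n fact_gt0. Qed.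

Lemma natrS1 m : (m.+1%:R : rat) = m%:R + 1.
Proof. by rewrite -addn1 natrD. Qed.

Lemma asinh_coef0 : asinh_coef 0 = 1.
Proof. by rewrite /asinh_coef expr0 mul1r muln0 fact0. Qed.

Lemma asinh_coef_rec j :
  2 * (j%:R + 1) * (2 * j%:R + 3) * asinh_coef j.+1 = - (2 * j%:R + 1) ^+ 2 * asinh_coef j.
Proof.
have e : (2 * j.+1 = (2 * j).+2)%N by rewrite mulnS.
rewrite /asinh_coef e !factS expnS.
have c2 : ((2 * j).+2%:R : rat) = 2 * j%:R + 2 by rewrite -addn2 natrD natrM.
have c1 : ((2 * j).+1%:R : rat) = 2 * j%:R + 1 by rewrite natrS1 natrM.
have c3 : ((2 * j).+3%:R : rat) = 2 * j%:R + 3 by rewrite -addn3 natrD natrM.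
rewrite !natrM !natrX ?natrM c1 c2 c3 natrS1 !exprS expr0.
have hj1 : (1 + j%:R : rat) != 0 by rewrite addrC -natrS1 pnatr_eq0.
have h2j1 : (2 * j%:R + 1 : rat) != 0 by rewrite -c1 pnatr_eq0.
have h2j3 : (2 * j%:R + 3 : rat) != 0 by rewrite -c3 pnatr_eq0.
have h4 : (4 : rat) != 0 by rewrite pnatr_eq0.
field; rewrite hj1 h2j1 h2j3 expf_neq0 //.
by rewrite !natr_fact_neq0.
Qed.

Lemma size_bseq m : size (Defs.bseq m) = m.+1.
Proof. by elim: m => //= m IHm; rewrite size_rcons IHm. Qed.

Lemma nth_bseq m i : (i <= m)%N -> nth 0 (Defs.bseq m) i = inv_asinh_coef i.
Proof.
elim: m => [|m IHm] im; first by move: im; rewrite leqn0 => /eqP ->.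
have [im1|] := ltnP i m.+1; first by rewrite /= nth_rcons size_bseq im1 IHm.
by move=> mi; have -> : i = m.+1 by apply/eqP; rewrite eqn_leq im mi.
Qed.

Lemma asinh_coef_conv k :
  \sum_(i < k.+1) asinh_coef i * inv_asinh_coef (k - i) = (k == 0)%:R.
Proof.
case: k => [|m]; first by rewrite big_ord1 asinh_coef0 mulr1.
rewrite big_ord_recl asinh_coef0 mul1r subn0 /inv_asinh_coef /=.
rewrite nth_rcons size_bseq ltnn eqxx mulr0n addrC; apply/eqP; rewrite subr_eq0.
apply/eqP/eq_bigr => i _.
by rewrite /bump leq0n add1n subSS !nth_bseq ?leq_subr.
Qed.

Lemma sqrt1p_coef_rec k :
  2 * (k%:R + 1) * sqrt1p_coef k.+1 = (1 - 2 * k%:R) * sqrt1p_coef k.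
Proof.
case: k => [|j]; first by rewrite /sqrt1p_coef /oddfact big_ord0 !mul1r.
rewrite /sqrt1p_coef /oddfact big_ord_recr [in LHS]factS.
have c1 : ((2 * j).+1%:R : rat) = 2 * j%:R + 1 by rewrite natrS1 natrM.
have c2 : (j.+2%:R : rat) = j%:R + 2 by rewrite -addn2 natrD.
rewrite !natrM c1 c2 natrS1 !exprS.
have hj1 : (j%:R + 1 : rat) != 0 by rewrite -natrS1 pnatr_eq0.
have hj2 : (j%:R + 2 : rat) != 0 by rewrite -c2 pnatr_eq0.
have h2 : (2 : rat) ^+ j != 0 by rewrite expf_neq0.
by field; apply/and4P; split; [exact: natr_fact_neq0 | rewrite addrC | |].
Qed.

(* [t d/dt] for power series in [x = t^2]. *)
Definition teuler (p : {poly rat}) : {poly rat} := ('X * p^`()) *+ 2.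

Lemma coef_teuler p i : (teuler p)`_i = p`_i * (2 * i)%:R.
Proof.
rewrite /teuler coefMn coefXM; case: i => [|i]; first by rewrite muln0 mulr0 mul0rn.
by rewrite coef_deriv -mulrnA mulr_natr mulnC.
Qed.

Lemma teulerD : {morph teuler : p q / p + q}.
Proof. by move=> p q; rewrite /teuler derivD mulrDr mulrnDl. Qed.

Lemma teulerM p q : teuler (p * q) = teuler p * q + p * teuler q.
Proof. by rewrite /teuler derivM mulrDr mulrnDl mulrnAl mulrnAr mulrA mulrCA. Qed.

(* Power series in x = t^2 are computed modulo x^N, in the ring {poly %/ 'X^N}. *)
Section Truncation.
Variable N : nat.
Hypothesis N_gt1 : (1 < N)%N.
Local Notation qT := {poly %/ ('X^N : {poly rat})}.
Local Notation inq := (in_qpoly ('X^N : {poly rat})).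

Let N_gt0 : (0 < N)%N. Proof. exact: ltnW. Qed.

Lemma coef_in_qpoly p i : (inq p)`_i = if (i < N)%N then p`_i else 0.
Proof.
rewrite /= mk_monic_Xn prednK // -Pdiv.RingMonic.take_poly_rmodp.
exact: coef_take_poly.
Qed.

Lemma coef_qpoly_ge (u : qT) i : (N <= i)%N -> u`_i = 0.
Proof.
move=> Ni; apply: nth_default; apply: leq_trans Ni.
by case: u => p /=; rewrite qualifE /= mk_monic_Xn prednK // size_polyXn.
Qed.

Lemma qpolyP (u v : qT) : (forall i, (i < N)%N -> u`_i = v`_i) -> u = v.
Proof.
move=> uv; apply: val_inj; apply/polyP => i.
by have [/uv //|Ni] := ltnP i N; rewrite !coef_qpoly_ge.
Qed.

Lemma in_qpolyK (u : qT) : inq u = u.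
Proof. by apply: qpolyP => i iN; rewrite coef_in_qpoly iN. Qed.

Lemma coef_qpolyM (u v : qT) k : (k < N)%N -> (u * v)`_k = ((u : {poly rat}) * v)`_k.
Proof. by move=> kN; rewrite [u * v]/(inq _) coef_in_qpoly kN. Qed.

Lemma qpolyX_poly : ('qX : qT) = 'X :> {poly rat}.
Proof. by rewrite qpolyXE ?monicXn // size_polyXn ltnS. Qed.

Definition qteuler (u : qT) : qT := inq (teuler u).

Lemma coef_qteuler (u : qT) i : (qteuler u)`_i = u`_i * (2 * i)%:R.
Proof.
rewrite coef_in_qpoly coef_teuler.
by case: ltnP => // Ni; rewrite coef_qpoly_ge ?mul0r.
Qed.

Lemma qteuler_in_qpoly p : qteuler (inq p) = inq (teuler p).
Proof.
by apply: qpolyP => i iN; rewrite coef_qteuler !coef_in_qpoly iN coef_teuler.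
Qed.

Lemma qteulerD : {morph qteuler : u v / u + v}.
Proof. by move=> u v; rewrite /qteuler -in_qpolyD -teulerD. Qed.

Lemma qteulerM (u v : qT) : qteuler (u * v) = qteuler u * v + u * qteuler v.
Proof.
rewrite [u * v]/(inq _) qteuler_in_qpoly teulerM in_qpolyD !in_qpolyM.
by rewrite !in_qpolyK.
Qed.

Lemma qteulerX : qteuler 'qX = 'qX *+ 2.
Proof. by rewrite qteuler_in_qpoly /teuler derivX mulr1 raddfMn. Qed.

Lemma coef_qpoly1 i : (1 : qT)`_i = (i == 0)%:R.
Proof. exact: coef1. Qed.

Lemma qteuler_eq0_eq1 (u : qT) : qteuler u = 0 -> u`_0 = 1 -> u = 1.
Proof.
move=> du u0; apply: qpolyP => -[|i] iN; first by rewrite u0 coef_qpoly1.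
have := congr1 (fun v : qT => v`_i.+1) du; rewrite /= coef_qteuler coef0.
by move/eqP; rewrite mulf_eq0 pnatr_eq0 orbF => /eqP->; rewrite coef_qpoly1.
Qed.

Lemma coef_qpolyD (u v : qT) i : (u + v)`_i = u`_i + v`_i.
Proof. exact: coefD. Qed.

Lemma coef_qpolyN (u : qT) i : (- u)`_i = - u`_i.
Proof. exact: coefN. Qed.

Lemma coef_qpoly_natM (c : nat) (u : qT) i : (c%:R * u)`_i = c%:R * u`_i.
Proof.
rewrite !mulr_natl; elim: c => [|c IHc]; first by rewrite !mulr0n coef0.
by rewrite !mulrS coefD IHc.
Qed.

Lemma coef_qpolyXM (u : qT) k : (k < N)%N -> ('qX * u)`_k = if k is j.+1 then u`_j else 0.
Proof. by move=> kN; rewrite coef_qpolyM // qpolyX_poly coefXM; case: k {kN}. Qed.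

Definition qseries (c : nat -> rat) : qT := inq (\poly_(i < N) c i).

Lemma coef_qseries c i : (i < N)%N -> (qseries c)`_i = c i.
Proof. by move=> iN; rewrite coef_in_qpoly iN coef_poly iN. Qed.

Lemma qteuler_qseries c : qteuler (qseries c) = qseries (fun i => c i * (2 * i)%:R).
Proof. by apply: qpolyP => i iN; rewrite coef_qteuler !coef_qseries. Qed.

Lemma coef_qseriesM c e k : (k < N)%N ->
  (qseries c * qseries e)`_k = \sum_(i < k.+1) c i * e (k - i)%N.
Proof.
move=> kN; rewrite coef_qpolyM // coefM; apply: eq_bigr => i _.
have iN : (i < N)%N by apply: leq_ltn_trans kN; rewrite -ltnS.
have kiN : (k - i < N)%N := leq_ltn_trans (leq_subr i k) kN.
by rewrite !coef_qseries.
Qed.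

Definition qasinh := qseries asinh_coef.
Definition qinv_asinh := qseries inv_asinh_coef.
Definition qsqrt1p := qseries sqrt1p_coef.
Definition qdasinh := qasinh + qteuler qasinh.

Lemma qasinh_mulV : qasinh * qinv_asinh = 1.
Proof.
by apply: qpolyP => k kN; rewrite coef_qseriesM // coef_qpoly1 -asinh_coef_conv.
Qed.

Lemma qdasinh_ode : (1 + 'qX) * qteuler qdasinh = - ('qX * qdasinh).
Proof.
apply: qpolyP => k kN; rewrite mulrDl mul1r coef_qpolyD coefN !coef_qpolyXM //.
case: k kN => [|j] kN; first by rewrite !coef_qteuler !mulr0 add0r oppr0.
rewrite /qdasinh !(coef_qpolyD, coef_qteuler) !coef_qseries ?(ltnW kN) //.
rewrite !natrM !natrS1.
apply: subr0_eq; transitivity (2 * (j%:R + 1) * (2 * j%:R + 3) * asinh_coef j.+1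
                               - - (2 * j%:R + 1) ^+ 2 * asinh_coef j); first by ring.
by rewrite asinh_coef_rec subrr.
Qed.

Lemma qsqrt1p_ode : (1 + 'qX) * qteuler qsqrt1p = 'qX * qsqrt1p.
Proof.
apply: qpolyP => k kN; rewrite mulrDl mul1r coef_qpolyD !coef_qpolyXM //.
case: k kN => [|j] kN; first by rewrite coef_qteuler mulr0 addr0.
rewrite !coef_qteuler !coef_qseries ?(ltnW kN) // !natrM !natrS1.
apply: subr0_eq; transitivity (2 * (j%:R + 1) * sqrt1p_coef j.+1
                               - (1 - 2 * j%:R) * sqrt1p_coef j); first by ring.
by rewrite sqrt1p_coef_rec subrr.
Qed.

Lemma coef0_qpolyM (u v : qT) : (u * v)`_0 = u`_0 * v`_0.
Proof. by rewrite coef_qpolyM // coef0M. Qed.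

Lemma coef0_qdasinh : qdasinh`_0 = 1.
Proof. by rewrite coef_qpolyD coef_qteuler coef_qseries // asinh_coef0 mulr0 addr0. Qed.

Lemma coef0_1pqX : (1 + 'qX : qT)`_0 = 1.
Proof. by rewrite coef_qpolyD coef_qpoly1 qpolyX_poly coefX addr0. Qed.

Lemma qdasinh_sqr : (1 + 'qX) * qdasinh ^+ 2 = 1.
Proof.
apply: qteuler_eq0_eq1; first exact: (der_1pX_sqr qteulerD qteulerM qteulerX qdasinh_ode).
by rewrite !coef0_qpolyM coef0_1pqX coef0_qdasinh !mul1r.
Qed.

Lemma qsqrt1p_mul_dasinh : qsqrt1p * qdasinh = 1.
Proof.
apply: qteuler_eq0_eq1.
  exact: (der_sqrt_mul_rsqrt qteulerM qsqrt1p_ode qdasinh_ode qdasinh_sqr).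
by rewrite coef0_qpolyM coef0_qdasinh coef_qseries // mulr1.
Qed.

End Truncation.

(* the coefficient of t^(2n+2) in t^2 f f'' *)
Definition ffpp_coef n := \sum_(i < n.+2)
  inv_asinh_coef i * inv_asinh_coef (n.+1 - i)%N
  * ((2 * (n.+1 - i)%N)%:R * ((2 * (n.+1 - i)%N)%:R - 1)).

(* (2l - 1)(3n^2 - 3nl + 2l^2 + 4n - 3l + 1) from the theorem, with n = l + m - 1 *)
Definition sqrt_weight l m : rat :=
  (2 * l%:R - 1) * (2 * l%:R ^+ 2 + 3 * (l%:R * m%:R) + 3 * m%:R ^+ 2 - 2 * l%:R - 2 * m%:R).

Definition sqrt_conv n := \sum_(l < n.+2)
  inv_asinh_coef l * sqrt1p_coef (n.+1 - l)%N * sqrt_weight l (n.+1 - l)%N.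

Section CoefficientComparison.
Variable n : nat.
Local Notation N := n.+2.
Local Notation qT := {poly %/ ('X^N : {poly rat})}.
Let N_gt1 : (1 < N)%N. Proof. by []. Qed.

Lemma ffpp_sqrt_conv : 3 * ffpp_coef n + 2 * sqrt_conv n = 0.
Proof.
have dB := der_inv (qteulerM N_gt1) (qasinh_mulV N_gt1).
have dD := der_rsqrt (qdasinh_sqr N_gt1) (qdasinh_ode N_gt1).
have := ffpp_identity (@qteulerD N) (qteulerM N_gt1) (qteulerX N_gt1) dB dD
                      (qsqrt1p_mul_dasinh N_gt1).
move=> /(congr1 (fun u : qT => u`_n.+1)) E; cbv beta in E.
move: E; rewrite mulrBr /qinv_asinh /qsqrt1p !qteuler_qseries //.
rewrite coef0 !(coef_qpolyD, coef_qpolyN, coef_qpoly_natM) !coef_qseriesM // => E.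
(* the coefficient read off from the identity is twice the left-hand side *)
apply: (mulfI (_ : (2 : rat) != 0)) => //; rewrite mulr0 -E.
rewrite /ffpp_coef /sqrt_conv -!sumrN -!big_split mulrDr !mulr_sumr -!sumrN -!big_split.
apply: eq_bigr => l _; rewrite /sqrt_weight !natrM /=.
ring.
Qed.

End CoefficientComparison.

Lemma conv_C0_C2E n : conv_C0_C2 n = ((2 * n)`!)%:R * ffpp_coef n.
Proof.
rewrite /ffpp_coef big_ord_recr /= subnn muln0 mul0r mulr0 addr0 mulr_sumr.
apply: eq_bigr => i _; rewrite /Cauchy2 -/(inv_asinh_coef _) -/(inv_asinh_coef _).
have -> : (n.+1 - i = (n - i).+1)%N by rewrite subSn // -ltnS.
set m := (n - i)%N.
rewrite (_ : (2 * m.+1 = (2 * m).+2)%N) ?mulnS // !factS !natrM.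
rewrite [(2 * m).+2%:R]natrS1 addrK.
by field; rewrite !natr_fact_neq0.
Qed.

Lemma sqrt1p_coefE n l : (l <= n.+1)%N ->
  (-1) ^ (n%:Z - l%:Z - 1) * dfact_odd (n%:Z - l%:Z) / 2 ^ (n%:Z - l%:Z)
  = - 2 * sqrt1p_coef (n.+1 - l) * ((n.+1 - l)`!)%:R :> rat.
Proof.
rewrite leq_eqVlt ltnS => /orP[/eqP-> | ln].
  have -> : n%:Z - n.+1%:Z = -1 by lia.
  rewrite (_ : -1 - 1 = - 2%:Z) // -exprnN sqrrN expr1n invr1 mul1r exprN1 invrK.
  rewrite subnn /dfact_odd /= /oddfact big_ord1 expr1 divr1.
  by rewrite fact0 !mulr1 mulN1r.
have [k ->] : exists k, n = (l + k)%N by exists (n - l)%N; lia.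
have -> : (l + k)%:Z - l%:Z = k by lia.
rewrite (_ : ((l + k).+1 - l = k.+1)%N); last by lia.
rewrite expfzDr ?oppr_eq0 ?oner_eq0 // exprN1 invrN1 -!exprnP /dfact_odd /sqrt1p_coef.
rewrite factS natrM natrS1 exprS.
have k1 : (1 + k%:R : rat) != 0 by rewrite addrC -natrS1 pnatr_eq0.
by field; rewrite natr_fact_neq0 k1 expf_neq0.
Qed.

Lemma theorem3_termE n l : (l <= n.+1)%N ->
  3 * ((((-1) ^ (n%:Z - l%:Z - 1) : rat)
      * ((2 * l)%:Z - 1)%:~R
      * ((3 * n ^ 2)%:Z - (3 * n * l)%:Z + (2 * l ^ 2)%:Z + (4 * n)%:Z
           - (3 * l)%:Z + 1)%:~R
      * dfact_odd (n%:Z - l%:Z)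
      / (3 * (2 : rat) ^ (n%:Z - l%:Z) * ((n.+1 - l)`!)%:R
           * ((2 * l)`!)%:R))
     * Cauchy2 l)
  = - 2 * (inv_asinh_coef l * sqrt1p_coef (n.+1 - l) * sqrt_weight l (n.+1 - l)).
Proof.
move=> ln; have := sqrt1p_coefE ln.
have nE : (n%:R : rat) = l%:R + (n.+1 - l)%N%:R - 1.
  by rewrite -natrD subnKC // natrS1 addrK.
set m := (n.+1 - l)%N; set sg := (-1) ^ _; set df := dfact_odd _; set p2 := 2 ^ _.
have p2_neq0 : p2 != 0 by rewrite expfz_neq0.
rewrite /Cauchy2 -/(inv_asinh_coef l) !(intrD, intrN) -!pmulrn !natrM => E.
transitivity (sg * df / p2 * inv_asinh_coef l / m`!%:R * ((2 * l%:R - 1)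
  * (3 * (n%:R * n%:R) - 3 * n%:R * l%:R + 2 * (l%:R * l%:R) + 4 * n%:R - 3 * l%:R + 1))).
  by field; rewrite p2_neq0 !natr_fact_neq0.
by rewrite E /sqrt_weight nE; field; rewrite natr_fact_neq0.
Qed.

Theorem theorem3 (n : nat) :
  conv_C0_C2 n =
  ((2 * n)`!)%:R *
  \sum_(l < n.+2)
     (((-1) ^ (n%:Z - l%:Z - 1) : rat)
      * ((2 * l)%:Z - 1)%:~R
      * ((3 * n ^ 2)%:Z - (3 * n * l)%:Z + (2 * l ^ 2)%:Z + (4 * n)%:Z
           - (3 * l)%:Z + 1)%:~R
      * dfact_odd (n%:Z - l%:Z)
      / (3 * (2 : rat) ^ (n%:Z - l%:Z) * ((n.+1 - l)`!)%:R
           * ((2 * l)`!)%:R))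
     * Cauchy2 l.
Proof.
rewrite conv_C0_C2E; congr (_ * _).
apply: (mulfI (_ : (3 : rat) != 0)) => //.
transitivity (- 2 * sqrt_conv n); first by have := ffpp_sqrt_conv n; lra.
rewrite /sqrt_conv !mulr_sumr; apply: eq_bigr => l _.
by rewrite theorem3_termE // leq_ord.
Qed.
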